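(* Let $p,q$ be positive integers with $p>2q$, and let $F$ be a triangle-free graph. Then the following are equivalent: (1) every clique blowup $G$ of $F$ satisfies $\chi(G)\leq\lceil\frac{p}{2q}\omega(G)\rceil$; (2) every clique blowup $G'$ of $F$ with $\omega(G')\leq\max\{\frac{2q(p-q-2)}{p-2q},\,2q\}$ satisfies $\chi(G')\leq\lceil\frac{p}{2q}\omega(G')\rceil$.
   Context: All graphs are finite and simple. $\chi(G)$ denotes the chromatic number and $\omega(G)$ the clique number (maximum size of a set of pairwise adjacent vertices) of $G$. Substituting a vertex $v$ of a graph $H$ by a graph $K$ produces the graph with vertex set $V(K)\cup V(H-v)$ and edge set $E(K)\cup E(H-v)\cup\{xy : x\in V(K),\ y\in N_H(v)\}$. A clique blowup of a graph $H$ is a graph obtained from $H$ by substituting every vertex of $H$ by a clique (a complete graph), where these cliques are allowed to be empty. *)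

From mathcomp Require Import all_boot all_order all_algebra.
Set Implicit Arguments. Unset Strict Implicit. Unset Printing Implicit Defensive.
Import Order.TTheory GRing.Theory Num.Theory.

Definition simple_graph (T : finType) (e : rel T) : Prop :=
  symmetric e /\ irreflexive e.

Definition triangle_free (T : finType) (e : rel T) : Prop :=
  forall x y z : T, ~ [&& e x y, e y z & e x z].

Definition colorableb (V : finType) (r : rel V) (k : nat) : bool :=
  [exists f : {ffun V -> 'I_k}, [forall x, forall y, r x y ==> (f x != f y)]].

(* Chromatic number: least k such that a proper k-colouring exists
   (for loopless graphs some k <= #|V| always works). *)
Definition chi (V : finType) (r : rel V) : nat :=
  \big[minn/#|V|]_(k < #|V|.+1 | colorableb r k) k.

Definition cliqueb (V : finType) (r : rel V) (S : {set V}) : bool :=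
  [forall x in S, forall y in S, (x != y) ==> r x y].

Definition omega (V : finType) (r : rel V) : nat :=
  \max_(S : {set V} | cliqueb r S) #|S|.

(* Clique blowup of (T, e) with clique sizes n : T -> nat (possibly 0):
   every vertex v is substituted by a clique on 'I_(n v); two distinct
   vertices (u,i), (v,j) are adjacent iff u = v or u v is an edge of F. *)
Definition blowup_vertex (T : finType) (n : T -> nat) : finType :=
  {v : T & 'I_(n v)}.

Definition blowup_rel (T : finType) (e : rel T) (n : T -> nat)
  : rel (blowup_vertex n) :=
  fun x y => (x != y) && ((tag x == tag y) || e (tag x) (tag y)).
Arguments blowup_rel {T} e n.

Definition ratio_bound (p q w : nat) : int :=
  Num.ceil (((p%:R / (2 * q)%N%:R) * w%:R)%R : rat).

From mathcomp Require Import all_boot all_order all_algebra.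
From mathcomp.zify Require Import zify.
Import Order.TTheory GRing.Theory Num.Theory.
Set Implicit Arguments. Unset Strict Implicit. Unset Printing Implicit Defensive.

(* Since F is triangle-free, a clique of a blowup G of F lies over a vertex or
   an edge of F, so omega(G) is the largest weight of a vertex or an edge.  If
   omega(G) = W > 2q, the clique substituted for each vertex can be cut in two
   so that G is covered by blowups G1, G2 of F with omega(G1) <= W - 2q and
   omega(G2) <= 2q.  As ceil(p/(2q) (W - 2q)) + p = ceil(p/(2q) W) and
   chi(G) <= chi(G1) + chi(G2), induction on omega reduces (1) to the blowups
   with omega <= 2q, all of which are covered by (2). *)

Section ChromaticNumber.
Variables (V : finType) (r : rel V).

Lemma chi_min k : colorableb r k -> (chi r <= k)%N.
Proof.
move=> col_k; have chi_le_card : (chi r <= #|V|)%N.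
  by apply: (big_ind (leq^~ #|V|)) => // [x y|i _]; [rewrite geq_min => ->|rewrite -ltnS].
have [lt_k|] := ltnP k #|V|.+1; last exact/leq_trans/ltnW.
exact: (@bigmin_le_cond _ _ _ #|V| (Ordinal lt_k) (colorableb r \o val) val col_k).
Qed.

Hypothesis r_irr : irreflexive r.

Lemma colorable_chi : colorableb r (chi r).
Proof.
rewrite /chi; apply: (big_ind (colorableb r)) => [|k l|//]; first last.
  by rewrite /minn; case: ifP.
apply/existsP; exists [ffun x => enum_rank x].
apply/forallP => x; apply/forallP => y; apply/implyP => rxy.
by rewrite !ffunE (inj_eq enum_rank_inj); apply: contraTneq rxy => ->; rewrite r_irr.
Qed.

End ChromaticNumber.

Lemma chi_hom (V W : finType) (r : rel V) (s : rel W) (g : W -> V) :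
  irreflexive r ->
  (forall x y, s x y -> r (g x) (g y)) -> (chi s <= chi r)%N.
Proof.
move=> r_irr g_hom; have /existsP[f /forallP f_proper] := colorable_chi r_irr.
apply: chi_min; apply/existsP; exists [ffun x => f (g x)].
apply/forallP => x; apply/forallP => y; apply/implyP => sxy; rewrite !ffunE.
exact: implyP (forallP (f_proper (g x)) (g y)) (g_hom x y sxy).
Qed.

(* The peeled part is [minn x q], except that a weight above W - q (whose
   neighbours then weigh less than q) is peeled down to exactly W - 2q. *)
Definition peel (W q x : nat) : nat :=
  if (W - q < x)%N then (x + 2 * q - W)%N else minn x q.

Section Peel.
Variables (W q : nat).
Hypothesis le_2q_W : (2 * q <= W)%N.

Lemma peel_le x : (peel W q x <= x)%N.
Proof. by rewrite /peel; case: ltnP; lia. Qed.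

Lemma peel_vertex x : (x <= W)%N ->
  (peel W q x <= 2 * q)%N /\ (x - peel W q x <= W - 2 * q)%N.
Proof. by rewrite /peel; case: ltnP; lia. Qed.

Lemma peel_edge x y : (x + y <= W)%N ->
  (peel W q x + peel W q y <= 2 * q)%N /\
  (x - peel W q x + (y - peel W q y) <= W - 2 * q)%N.
Proof. by rewrite /peel; case: (ltnP (W - q) x); case: (ltnP (W - q) y); lia. Qed.

End Peel.

Section Cliques.
Variables (V : finType) (r : rel V).

Lemma cliqueP (S : {set V}) :
  reflect {in S &, forall x y, x != y -> r x y} (cliqueb r S).
Proof.
apply: (iffP forall_inP) => [cl x y xS yS | cl x xS].
  exact/implyP/(forall_inP (cl x xS)).
by apply/forall_inP => y yS; apply/implyP; apply: cl.
Qed.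

End Cliques.

Section Blowup.
Variables (T : finType) (e : rel T).
Implicit Types (n a b : T -> nat).

Lemma blowup_rel_irr n : irreflexive (blowup_rel e n).
Proof. by move=> x; rewrite /blowup_rel eqxx. Qed.

Lemma eq_blowup_vertex n (x y : blowup_vertex n) :
  (x == y) = (tag x == tag y) && (val (tagged x) == val (tagged y)).
Proof.
apply/eqP/andP => [-> //|]; case: x y => [v i] [w j] /= [/eqP eq_vw]; subst w.
by move=> /eqP/val_inj ->.
Qed.

Lemma blowup_rel_transfer n n' (x y : blowup_vertex n) (x' y' : blowup_vertex n') :
  blowup_rel e n x y -> tag x' = tag x -> tag y' = tag y -> (x' == y') = (x == y) ->
  blowup_rel e n' x' y'.
Proof. by rewrite /blowup_rel => + -> -> ->. Qed.

Lemma chi_blowup_mono n n' : (forall v, n v <= n' v)%N ->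
  (chi (blowup_rel e n) <= chi (blowup_rel e n'))%N.
Proof.
move=> le_n.
pose g (x : blowup_vertex n) : blowup_vertex n' :=
  Tagged _ (widen_ord (le_n (tag x)) (tagged x)).
apply: (chi_hom (@blowup_rel_irr n') (g := g)) => x y.
by move=> /blowup_rel_transfer; apply; rewrite // !eq_blowup_vertex.
Qed.

Lemma chi_blowup_add a b :
  (chi (blowup_rel e (fun v => a v + b v)) <=
     chi (blowup_rel e a) + chi (blowup_rel e b))%N.
Proof.
have /existsP[f1 /forallP proper1] := colorable_chi (@blowup_rel_irr a).
have /existsP[f2 /forallP proper2] := colorable_chi (@blowup_rel_irr b).
set k1 := chi _ in f1 proper1; set k2 := chi _ in f2 proper2.
pose c (x : blowup_vertex (fun v => a v + b v)) : 'I_(k1 + k2) :=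
  match split (tagged x) with
  | inl i => lshift k2 (f1 (Tagged _ i))
  | inr j => rshift k1 (f2 (Tagged _ j))
  end.
apply: chi_min; apply/existsP; exists [ffun x => c x].
apply/forallP => -[v i]; apply/forallP => -[w j]; apply/implyP; rewrite !ffunE /c /=.
case: splitP => i' Ei; case: splitP => j' Ej; rewrite ?eq_lrshift ?eq_rlshift //.
- rewrite (inj_eq (@lshift_inj _ _)) => rel_ij.
  apply: (implyP (forallP (proper1 _) _)); apply: blowup_rel_transfer rel_ij _ _ _ => //.
  by rewrite !eq_blowup_vertex /= Ei Ej.
- rewrite (inj_eq (@rshift_inj _ _)) => rel_ij.
  apply: (implyP (forallP (proper2 _) _)); apply: blowup_rel_transfer rel_ij _ _ _ => //.
  rewrite !eq_blowup_vertex /= Ei Ej.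
  by case: (eqVneq v w) => [eq_vw|//]; subst w; rewrite eqn_add2l.
Qed.

Lemma chi_blowup_split n a b : (forall v, n v <= a v + b v)%N ->
  (chi (blowup_rel e n) <= chi (blowup_rel e a) + chi (blowup_rel e b))%N.
Proof. by move=> le_n; apply: leq_trans (chi_blowup_mono le_n) (chi_blowup_add a b). Qed.

Definition blowup_over n (S : {set T}) : {set blowup_vertex n} :=
  [set x | tag x \in S].

Lemma card_blowup_over n S : #|blowup_over n S| = (\sum_(u in S) n u)%N.
Proof.
rewrite -sum1_card (partition_big tag (mem S)) => [|x]; last by rewrite inE.
apply: eq_bigr => u uS; rewrite -[n u]card_ord -sum1_card (big_tag _ u).
apply: eq_big => [x|x /andP[_ /eqP tag_x]]; last by rewrite (untagE _ _ tag_x).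
by rewrite !inE; case: eqVneq => [->|]; rewrite ?andbT ?andbF.
Qed.

Lemma omega_blowup n :
  omega (blowup_rel e n) = (\max_(S : {set T} | cliqueb e S) \sum_(u in S) n u)%N.
Proof.
rewrite /omega; apply/eqP; rewrite eqn_leq.
apply/andP; split; apply/bigmax_leqP => S /cliqueP cliqueS.
- have tagS_clique : cliqueb e (tag @: S).
    apply/cliqueP => _ _ /imsetP[x xS ->] /imsetP[y yS ->] ne_tag.
    have ne_xy : x != y by apply: contra_neq ne_tag => ->.
    by have /andP[_] := cliqueS x y xS yS ne_xy; rewrite (negbTE ne_tag).
  apply: leq_trans (leq_bigmax_cond _ tagS_clique); rewrite -card_blowup_over.
  by apply/subset_leq_card/subsetP => x xS; rewrite inE imset_f.
- rewrite -card_blowup_over; apply: leq_bigmax_cond; apply/cliqueP => x y.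
  rewrite !inE => xS yS ne_xy; rewrite /blowup_rel ne_xy /=.
  by case: eqVneq => //= ne_tag; apply: cliqueS.
Qed.

Hypotheses (e_sym : symmetric e) (e_irr : irreflexive e) (e_tf : triangle_free e).

Lemma triangle_free_clique_sub S u v :
  cliqueb e S -> u \in S -> v \in S -> u != v -> S \subset [set u; v].
Proof.
move=> /cliqueP cl uS vS ne_uv; apply/subsetP => z zS; rewrite !inE.
apply/negPn/negP => /norP[ne_zu ne_zv].
by apply: (@e_tf u v z); rewrite (cl u v) // (cl v z) 1?eq_sym // (cl u z) 1?eq_sym.
Qed.

Lemma omega_blowup_leP n W :
  (omega (blowup_rel e n) <= W)%N <->
  (forall v, n v <= W)%N /\ (forall u v, e u v -> n u + n v <= W)%N.
Proof.
rewrite omega_blowup; split => [/bigmax_leqP le_W | [le_v le_e]].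
  split => [v | u v euv].
    have := le_W [set v]; rewrite big_set1; apply.
    by apply/cliqueP => x y /set1P-> /set1P->; rewrite eqxx.
  have ne_uv : u != v by apply: contraTneq euv => ->; rewrite e_irr.
  have := le_W [set u; v]; rewrite big_setU1 ?inE //= big_set1; apply.
  by apply/cliqueP => x y /set2P[]-> /set2P[]->; rewrite ?eqxx // e_sym.
apply/bigmax_leqP => S cliqueS.
have [-> | [u uS]] := set_0Vmem S; first by rewrite big_set0.
have [sub_u | /subsetPn[v vS]] := boolP (S \subset [set u]).
  have -> : S = [set u] by apply/eqP; rewrite eqEsubset sub_u sub1set uS.
  by rewrite big_set1.
rewrite inE => ne_vu.
have -> : S = [set u; v].
  apply/eqP; rewrite eqEsubset triangle_free_clique_sub 1?eq_sym //.
  by rewrite subUset !sub1set uS vS.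
rewrite big_setU1 ?inE 1?eq_sym //= big_set1; apply: le_e.
by move/cliqueP: cliqueS; apply; rewrite // eq_sym.
Qed.

Lemma blowup_peel n q : (2 * q <= omega (blowup_rel e n))%N ->
  exists a b, [/\ forall v, n v = a v + b v,
    omega (blowup_rel e a) <= omega (blowup_rel e n) - 2 * q &
    omega (blowup_rel e b) <= 2 * q]%N.
Proof.
set W := omega _ => le_2q_W.
have [le_v le_e] := (omega_blowup_leP n W).1 (leqnn W).
have peel_v v := peel_vertex le_2q_W (le_v v).
have peel_e u v euv := peel_edge le_2q_W (le_e u v euv).
exists (fun v => n v - peel W q (n v))%N, (fun v => peel W q (n v)); split.
- by move=> v; rewrite subnK // peel_le.
- apply/omega_blowup_leP; split => [v | u v /peel_e[]//].
  by case: (peel_v v).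
- apply/omega_blowup_leP; split => [v | u v /peel_e[]//].
  by case: (peel_v v).
Qed.

End Blowup.

Section RatioBound.
Variables (p q : nat).
Local Open Scope ring_scope.

Lemma ratio_bound_mono : {homo ratio_bound p q : w1 w2 / (w1 <= w2)%N >-> w1 <= w2}.
Proof.
move=> w1 w2 le_w; apply: le_ceil; apply: ler_wpM2l; last by rewrite ler_nat.
by rewrite divr_ge0 ?ler0n.
Qed.

Lemma ratio_bound_shift w : (0 < q)%N ->
  ratio_bound p q (w + 2 * q) = ratio_bound p q w + p%:Z.
Proof.
move=> q_gt0; rewrite /ratio_bound natrD mulrDr divfK ?pnatr_eq0 -?lt0n ?muln_gt0 //.
by rewrite ceilDrz ?natr_int // -(intrKceil (R := rat) p%:Z) pmulrn.
Qed.

Lemma ratio_bound_2q : (0 < q)%N -> ratio_bound p q (2 * q) = p%:Z.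
Proof.
move=> q_gt0; rewrite -[(2 * q)%N]add0n ratio_bound_shift //.
by rewrite /ratio_bound mulr0 ceil0 add0r.
Qed.

End RatioBound.

Lemma chi_blowup_le_ratio_bound (p q : nat) (T : finType) (e : rel T) :
  (0 < q)%N -> symmetric e -> irreflexive e -> triangle_free e ->
  (forall n : T -> nat, (omega (blowup_rel e n) <= 2 * q)%N ->
     ((chi (blowup_rel e n))%:Z <= ratio_bound p q (omega (blowup_rel e n)))%R) ->
  forall n : T -> nat,
    ((chi (blowup_rel e n))%:Z <= ratio_bound p q (omega (blowup_rel e n)))%R.
Proof.
move=> q_gt0 e_sym e_irr e_tf small n.
have [W] := ubnP (omega (blowup_rel e n)); elim: W n => // W IH n lt_omega_W.
have [/small // | lt_2q] := leqP (omega (blowup_rel e n)) (2 * q).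
have [a [b [n_ab omega_a omega_b]]] := blowup_peel e_sym e_irr e_tf (ltnW lt_2q).
have chi_a : ((chi (blowup_rel e a))%:Z <=
              ratio_bound p q (omega (blowup_rel e n) - 2 * q))%R.
  apply: le_trans (ratio_bound_mono p q omega_a); apply: IH; lia.
have chi_b : ((chi (blowup_rel e b))%:Z <= p%:Z)%R.
  rewrite -(ratio_bound_2q p q_gt0).
  exact: le_trans (small b omega_b) (ratio_bound_mono p q omega_b).
rewrite -(subnK (ltnW lt_2q)) ratio_bound_shift //.
apply: le_trans (lerD chi_a chi_b); rewrite -PoszD lez_nat.
by apply: chi_blowup_split => v; rewrite n_ab.
Qed.

Theorem theorem1p1 (p q : nat) (T : finType) (e : rel T) :
  (0 < q)%N -> (2 * q < p)%N ->
  simple_graph e -> triangle_free e ->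
  ((forall n : T -> nat,
      ((chi (blowup_rel e n))%:Z <= ratio_bound p q (omega (blowup_rel e n)))%R)
   <->
   (forall n : T -> nat,
      ((omega (blowup_rel e n))%:R <=
         Num.max ((2 * q)%N%:R * (p%:R - q%:R - 2) / (p%:R - (2 * q)%N%:R))
                 (2 * q)%N%:R :> rat)%R ->
      ((chi (blowup_rel e n))%:Z <= ratio_bound p q (omega (blowup_rel e n)))%R)).
Proof.
(* Only the instances of (2) with omega <= 2q are used. *)
move=> q_gt0 _ [e_sym e_irr] e_tf; split => [bound n _ | bound_small]; first exact: bound.
apply: chi_blowup_le_ratio_bound => // n small_n; apply: bound_small.
by rewrite le_max ler_nat small_n orbT.
Qed.
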